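(* Let $G$ be a symmetric star topology with compute nodes $V_C$, where $w_v$ is the bandwidth of the edges between compute node $v$ and the center. Let $R,S$ be sets with $|R|<|S|$, $N=|R|+|S|$, initially partitioned among the compute nodes with $N_v$ elements (of $R$ and $S$ together) at node $v$. Let $V_\alpha=\{v\in V_C:\min\{N_v,N-N_v\}<|R|\}$ and $V_\beta=V_C\setminus V_\alpha$. Then any algorithm computing $R\times S$ has (tuple) cost $\Omega(C)$, where \[C=\max\Big\{\max_{v\in V_\alpha}\frac{\min\{N_v,N-N_v\}}{w_v},\ \max_{v\in V_\beta}\frac{|R|}{w_v}\Big\}.\]
   Context: Topology-aware model: the network is a directed graph; each edge $e$ has bandwidth $w_e>0$; compute nodes store data and compute, other nodes only route. A symmetric star topology has compute nodes each connected to a single central routing node by an edge in each direction with equal bandwidth. The input is partitioned without duplication; the algorithm knows topology, bandwidths and local fragment sizes. Computation proceeds in synchronous rounds; the tuple cost of a round is $\max_e|Y(e)|/w_e$ with $|Y(e)|$ the number of elements routed through edge $e$; total cost is the sum over rounds. Computing $R\times S$ means every pair $(r,s)\in R\times S$ is emitted by at least one compute node holding both $r$ and $s$. *)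

From mathcomp Require Import all_boot all_order all_algebra.
Set Implicit Arguments. Unset Strict Implicit. Unset Printing Implicit Defensive.
Import Order.TTheory GRing.Theory Num.Theory.
Local Open Scope ring_scope.

(* Data elements: R = 'I_nr (tagged inl), S = 'I_ns (tagged inr). *)
Definition elem (nr ns : nat) : finType := ('I_nr + 'I_ns)%type.

(* One synchronous round on a star whose compute nodes are V (the centre is
   implicit).  [out v] = set of elements routed through the edge v -> centre,
   [inc v] = set of elements routed through the edge centre -> v. *)
Record round (V E : finType) := Round { out : V -> {set E}; inc : V -> {set E} }.

Definition state (V E : finType) := V -> {set E}.

Definition valid_round (V E : finType) (H : state V E) (rd : round V E) : Prop :=
  (forall v, out rd v \subset H v) /\
  (forall v, inc rd v \subset \bigcup_(u | u != v) out rd u).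

Definition step (V E : finType) (H : state V E) (rd : round V E) : state V E :=
  fun v => H v :|: inc rd v.

Fixpoint valid_alg (V E : finType) (H : state V E) (alg : seq (round V E)) : Prop :=
  match alg with
  | [::] => True
  | rd :: rest => valid_round H rd /\ valid_alg (step H rd) rest
  end.

Definition final (V E : finType) (H : state V E) (alg : seq (round V E)) : state V E :=
  foldl (@step V E) H alg.

Definition init (V E : finType) (loc : E -> V) : state V E :=
  fun v => [set x | loc x == v].

(* tuple cost of a round: max over edges of |Y(e)| / w_e; both edges of v
   have bandwidth w v. *)
Definition round_cost (R : realFieldType) (V E : finType) (w : V -> R)
  (rd : round V E) : R :=
  \big[Num.max/0]_(v : V) Num.max ((#|out rd v|)%:R / w v) ((#|inc rd v|)%:R / w v).

Definition cost (R : realFieldType) (V E : finType) (w : V -> R)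
  (alg : seq (round V E)) : R :=
  \sum_(rd <- alg) round_cost w rd.

Definition computes_cross (V : finType) (nr ns : nat)
  (H : state V (elem nr ns)) : Prop :=
  forall (r : 'I_nr) (s : 'I_ns), exists v : V,
    (inl r : elem nr ns) \in H v /\ (inr s : elem nr ns) \in H v.

Definition Nv (V E : finType) (loc : E -> V) (v : V) : nat := #|[set x | loc x == v]|.

Definition Cbound (R : realFieldType) (V : finType) (nr ns : nat)
  (loc : elem nr ns -> V) (w : V -> R) : R :=
  let N := (nr + ns)%N in
  let m v := minn (Nv loc v) (N - Nv loc v) in
  Num.max (\big[Num.max/0]_(v : V | (m v < nr)%N) ((m v)%:R / w v))
          (\big[Num.max/0]_(v : V | ~~ (m v < nr)%N) (nr%:R / w v)).

(* Fix a compute node v holding the set A of elements, and let X be the set of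
   elements that ever cross one of the two edges of v.  Elements of A outside
   X never leave v, and v only ever holds A and X; so an element of A \ X and
   an element outside A :|: X are never held together.  Since every pair of
   R x S must meet somewhere, the elements outside X either all lie on the same
   side of the cut (A, ~: A), or miss R or S entirely; hence |X| is at least
   min(N_v, N - N_v, |R|).  Both edges of v have bandwidth w_v, so one of them
   carries at least half of X, and the cost is at least min(N_v, N - N_v, |R|)
   / (2 w_v) for every v, which is C / 2. *)
From mathcomp Require Import all_boot all_order all_algebra zify.
Set Implicit Arguments. Unset Strict Implicit. Unset Printing Implicit Defensive.
Import Order.TTheory GRing.Theory Num.Theory.
Local Open Scope ring_scope.

Lemma card_le_of_inj (T E : finType) (f : T -> E) (X : {set E}) :
  injective f -> (forall t, f t \in X) -> (#|T| <= #|X|)%N.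
Proof.
move=> f_inj fX; rewrite -cardsT -(card_imset _ f_inj).
by apply: subset_leq_card; apply/subsetP => _ /imsetP [t _ ->].
Qed.

Lemma card_big_setU_le (I : Type) (E : finType) (r : seq I) (F : I -> {set E}) :
  (#|\bigcup_(i <- r) F i| <= \sum_(i <- r) #|F i|)%N.
Proof.
elim/big_ind2: _ => [|k1 X1 k2 X2 X1k X2k|//]; first by rewrite cards0.
by apply: leq_trans (leq_card_setU X1 X2).1 _; apply: leq_add.
Qed.

Lemma cross_cut_bound (nr ns : nat) (A X : {set elem nr ns}) :
  (nr <= ns)%N ->
  (forall r s, inl r \notin X -> inr s \notin X -> (inl r \in A) = (inr s \in A)) ->
  (minn (minn #|A| #|~: A|) nr <= #|X|)%N.
Proof.
move=> le_nr_ns same_side.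
case: (pickP (fun r => inl r \notin X)) => [r0 r0X|allR]; last first.
  have := @card_le_of_inj _ _ _ X inl_inj (fun r => negbFE (allR r)).
  by rewrite card_ord; lia.
case: (pickP (fun s => inr s \notin X)) => [s0 s0X|allS]; last first.
  have := @card_le_of_inj _ _ _ X inr_inj (fun s => negbFE (allS s)).
  by rewrite card_ord; lia.
have side x : x \notin X -> (x \in A) = (inr s0 \in A).
  case: x => [r|s] xX; first exact: same_side _ _ xX s0X.
  by rewrite -(same_side r0 s r0X xX); exact: same_side.
have [s0A|s0A] := boolP (inr s0 \in A).
- have : ~: A \subset X.
    apply/subsetP => x; rewrite inE => xA.
    by apply: contraT => /side; rewrite (negbTE xA) s0A.
  by move/subset_leq_card; lia.
- have : A \subset X.
    by apply/subsetP => x xA; apply: contraT => /side; rewrite xA (negbTE s0A).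
  by move/subset_leq_card; lia.
Qed.

Section Confinement.
Variables (V E : finType) (v : V).

Definition sent_by (alg : seq (round V E)) : {set E} := \bigcup_(rd <- alg) out rd v.
Definition received_by (alg : seq (round V E)) : {set E} := \bigcup_(rd <- alg) inc rd v.

Variable A : {set E}.

Definition confined (sent recv : {set E}) (H : state V E) : Prop :=
  H v \subset A :|: recv /\ forall u, u != v -> H u :&: A \subset sent.

Lemma confined_step (H : state V E) (rd : round V E) sent recv :
  valid_round H rd -> confined sent recv H ->
  confined (sent :|: out rd v) (recv :|: inc rd v) (step H rd).
Proof.
move=> [out_held inc_forwarded] [Hv Hu]; split.
  by rewrite /step setUA setUSS.
move=> u uv; apply/subsetP => x /setIP [/setUP [xH|x_in] xA].
  by rewrite inE (subsetP (Hu u uv)) // inE xH.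
have /bigcupP [u' _ x_out] := subsetP (inc_forwarded u) x x_in.
have [<-|u'_ne_v] := eqVneq u' v; first by rewrite inE x_out orbT.
by rewrite inE (subsetP (Hu u' u'_ne_v)) // inE (subsetP (out_held u')).
Qed.

Lemma confined_final (alg : seq (round V E)) (H : state V E) sent recv :
  valid_alg H alg -> confined sent recv H ->
  confined (sent :|: sent_by alg) (recv :|: received_by alg) (final H alg).
Proof.
rewrite /sent_by /received_by.
elim: alg H sent recv => [|rd alg IH] H sent recv /=; first by rewrite !big_nil !setU0.
move=> [valid_rd valid_rest] conf; rewrite !big_cons !setUA.
exact/IH/confined_step.
Qed.

End Confinement.

Section CrossingTraffic.
Variables (V : finType) (nr ns : nat) (loc : elem nr ns -> V) (v : V).
Variable alg : seq (round V (elem nr ns)).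
Hypothesis valid : valid_alg (init loc) alg.

Let A := [set x | loc x == v].
Let X := sent_by v alg :|: received_by v alg.

Lemma confined_init : confined v A set0 set0 (init loc).
Proof.
split=> [|u uv]; first by rewrite setU0.
apply/subsetP => x; rewrite !inE => /andP [/eqP -> /eqP u_eq_v].
by rewrite u_eq_v eqxx in uv.
Qed.

Lemma cut_never_colocated x y u : x \in A -> x \notin X -> y \notin A -> y \notin X ->
  x \in final (init loc) alg u -> y \notin final (init loc) alg u.
Proof.
have [Hv Hu] := confined_final valid confined_init; rewrite !set0U in Hv Hu.
move=> xA xX yA yX xH; have [->|uv] := eqVneq u v.
  apply: contra yX => /(subsetP Hv) /setUP [yA'|y_recv]; first by rewrite yA' in yA.
  by rewrite inE y_recv orbT.
by move: xX; rewrite inE (subsetP (Hu u uv)) // inE xH.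
Qed.

Lemma crossing_traffic_bound : (nr < ns)%N ->
  computes_cross (final (init loc) alg) ->
  (minn (minn #|A| #|~: A|) nr <=
     \sum_(rd <- alg) #|out rd v| + \sum_(rd <- alg) #|inc rd v|)%N.
Proof.
move=> lt_nr_ns covers.
have X_le : (#|X| <= \sum_(rd <- alg) #|out rd v| + \sum_(rd <- alg) #|inc rd v|)%N.
  by apply: leq_trans (leq_card_setU _ _).1 _; apply: leq_add; apply: card_big_setU_le.
apply: leq_trans X_le; apply: cross_cut_bound; first exact: ltnW.
move=> r s rX sX; have [u [rH sH]] := covers r s.
apply/idP/idP => [rA|sA]; apply: contraT => nA.
  by rewrite (negbTE (cut_never_colocated rA rX nA sX rH)) in sH.
by rewrite (negbTE (cut_never_colocated sA sX nA rX sH)) in rH.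
Qed.

End CrossingTraffic.

Lemma edge_traffic_cost (R : realFieldType) (V E : finType) (w : V -> R)
    (alg : seq (round V E)) (v : V) :
  (\sum_(rd <- alg) #|out rd v|)%:R / w v <= cost w alg /\
  (\sum_(rd <- alg) #|inc rd v|)%:R / w v <= cost w alg.
Proof.
rewrite !natr_sum !mulr_suml.
split; apply: ler_sum => rd _; apply: le_trans (le_bigmax _ _ v);
  by rewrite le_max lexx ?orbT.
Qed.

Lemma cost_ge0 (R : realFieldType) (V E : finType) (w : V -> R)
    (alg : seq (round V E)) : 0 <= cost w alg.
Proof. by apply: sumr_ge0 => rd _; apply: bigmax_ge_id. Qed.

Lemma node_cost_bound (R : realFieldType) (V : finType) (w : V -> R) (nr ns : nat)
    (loc : elem nr ns -> V) (alg : seq (round V (elem nr ns))) (v : V) :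
  0 < w v -> (nr < ns)%N -> valid_alg (init loc) alg ->
  computes_cross (final (init loc) alg) ->
  (minn (minn (Nv loc v) ((nr + ns)%N - Nv loc v)) nr)%:R / w v <= 2%:R * cost w alg.
Proof.
move=> wv_gt0 lt_nr_ns valid covers.
have card_compl : ((nr + ns) - Nv loc v)%N = #|~: [set x | loc x == v]|.
  by rewrite cardsCs setCK card_sum !card_ord.
have [out_cost inc_cost] := @edge_traffic_cost _ _ _ w alg v.
rewrite card_compl (mulr_natl (cost w alg)) mulr2n.
apply: le_trans (lerD out_cost inc_cost); rewrite -mulrDl -natrD.
by rewrite ler_pM2r ?invr_gt0 // ler_nat crossing_traffic_bound.
Qed.

Theorem theorem8 :
  exists c : rat, 0 < c /\
  forall (R : realFieldType) (V : finType) (w : V -> R) (nr ns : nat)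
    (loc : elem nr ns -> V) (alg : seq (round V (elem nr ns))),
    (forall v, 0 < w v) ->
    (nr < ns)%N ->
    valid_alg (init loc) alg ->
    computes_cross (final (init loc) alg) ->
    ratr c * Cbound loc w <= cost w alg.
Proof.
exists 2%:R^-1; split=> // R V w nr ns loc alg w_gt0 lt_nr_ns valid covers.
rewrite fmorphV (rmorph_nat _ 2) ler_pdivrMl ?ltr0n //.
have cost2_ge0 : 0 <= 2%:R * cost w alg by rewrite mulr_ge0 ?cost_ge0.
rewrite /Cbound ge_max; apply/andP; split; apply: bigmax_le => // v v_cut;
  apply: le_trans (node_cost_bound (w_gt0 v) lt_nr_ns valid covers);
  by rewrite ler_pM2r ?invr_gt0 // ler_nat; move: v_cut; lia.
Qed.
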